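(* Let $G$ be a simple graph with canonical mixed graph $F$ and let $Y$ be as defined in the context. Let $u,w\in V(G)$ and $v\in Y$ be such that $\overrightarrow{uv}$ and $\overrightarrow{vw}$ are arcs of $F$ and $uw\notin E(G)$. Then $cM_2(G-uv-vw+uw)>cM_2(G)$.
   Context: All graphs are finite and simple; $d_G(u)$ is the degree of $u$ and $cM_2(G)=\sum_{uv\in E(G)}|d_G(u)^2-d_G(v)^2|$. $G-uv-vw+uw$ denotes $G$ with edges $uv,vw$ deleted and edge $uw$ added. The canonical mixed graph $F$ of $G$ has vertex set $V(G)$; for each edge $uv\in E(G)$: if $d_G(u)>d_G(v)$ then $F$ contains the arc $\overrightarrow{uv}$, and if $d_G(u)=d_G(v)$ then $F$ contains the undirected edge $uv$. $d^+_F(u)$ (resp. $d^-_F(u)$) is the number of arcs of $F$ with tail (resp. head) $u$. $Y=\{u\in V(G): d^+_F(u)< d^-_F(u)\}$. *)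

From mathcomp Require Import all_boot all_order.
Set Implicit Arguments. Unset Strict Implicit. Unset Printing Implicit Defensive.

Definition simple_graph (T : finType) (e : rel T) : Prop :=
  symmetric e /\ irreflexive e.

Definition deg (T : finType) (e : rel T) (x : T) : nat := #|[set y | e x y]|.

Definition sqdiff (T : finType) (e : rel T) (x y : T) : nat :=
  maxn (deg e x ^ 2) (deg e y ^ 2) - minn (deg e x ^ 2) (deg e y ^ 2).

(* cM_2(G) = sum over edges uv of |d(u)^2 - d(v)^2|; each unordered edge is
   counted twice in the sum over ordered adjacent pairs, hence the halving
   (the ordered sum is always even by symmetry of sqdiff). *)
Definition cM2 (T : finType) (e : rel T) : nat :=
  (\sum_(x : T) \sum_(y : T | e x y) sqdiff e x y) %/ 2.

Definition arcF (T : finType) (e : rel T) (x y : T) : bool :=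
  e x y && (deg e y < deg e x).

Definition outdegF (T : finType) (e : rel T) (x : T) : nat := #|[set y | arcF e x y]|.
Definition indegF (T : finType) (e : rel T) (x : T) : nat := #|[set y | arcF e y x]|.

Definition Yset (T : finType) (e : rel T) : {set T} :=
  [set x | outdegF e x < indegF e x].

Definition same_pair (T : finType) (x y a b : T) : bool :=
  ((x == a) && (y == b)) || ((x == b) && (y == a)).

Definition transform (T : finType) (e : rel T) (u v w : T) : rel T :=
  fun x y => (e x y && ~~ same_pair x y u v && ~~ same_pair x y v w)
             || same_pair x y u w.

From mathcomp Require Import all_boot all_order zify.

Set Implicit Arguments.
Unset Strict Implicit.
Unset Printing Implicit Defensive.

(* Removing uv, vw and adding uw keeps every degree except d(v), which drops
   by 2.  Since d(w) < d(v) < d(u), the old terms of uv and vw add up to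
   d(u)^2 - d(w)^2, the term of the new edge uw.  Every other edge vy changes
   its term by at most a := d(v)^2 - (d(v) - 2)^2 = 4 d(v) - 4 in absolute
   value, and it gains exactly a when d(y) >= d(v).  Among these y there are
   P with d(y) >= d(v) and Q with d(y) < d(v); then the out-degree of v in F
   is Q + 1 and its in-degree is at most P + 1, so v \in Y forces P > Q and
   the total change is at least a > 0. *)

Lemma bigD2 (R : Type) (idx : R) (op : Monoid.com_law idx) (I : finType)
    (F : I -> R) (p q : I) :
  p != q ->
  \big[op/idx]_i F i =
    op (F p) (op (F q) (\big[op/idx]_(i | (i != p) && (i != q)) F i)).
Proof. by move=> pq; rewrite (bigD1 p) //= (bigD1 q) //= eq_sym. Qed.

Lemma sum_eq_mul (I : finType) (P : pred I) (F : I -> nat) (j : I) :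
  P j -> \sum_(i | P i) (i == j) * F i = F j.
Proof.
move=> Pj; rewrite (bigD1 j) //= eqxx mul1n big1 ?addn0 // => i /andP[_].
by move/negbTE->.
Qed.

Lemma card_set_sumb (T : finType) (p : pred T) : #|[set x | p x]| = \sum_x p x.
Proof. by rewrite -sum1dep_card big_mkcond; apply: eq_bigr => x _; case: (p x). Qed.

Lemma deg_sumb (T : finType) (r : rel T) (x : T) : deg r x = \sum_y r x y.
Proof. exact: card_set_sumb. Qed.

Lemma sum_adj_bigD1 (T : finType) (r : rel T) (g : T -> T -> nat) (v : T) :
  symmetric r -> irreflexive r -> (forall x y, g x y = g y x) ->
  \sum_x \sum_y r x y * g x y =
    2 * \sum_y r v y * g v y + \sum_(x | x != v) \sum_(y | y != v) r x y * g x y.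
Proof.
move=> rC r0 gC; rewrite (bigD1 v) //=.
under [X in _ + X]eq_bigr => x _ do rewrite (bigD1 v) //.
rewrite big_split /=.
have -> : \sum_(x | x != v) r x v * g x v = \sum_y r v y * g v y.
  by rewrite [RHS](bigD1 v) //= r0 mul0n add0n; apply: eq_bigr => x _; rewrite rC gC.
lia.
Qed.

Lemma sum_same_pair (T : finType) (P : pred T) (g : T -> T -> nat) (a b : T) :
  a != b -> P a -> P b ->
  \sum_(x | P x) \sum_(y | P y) same_pair x y a b * g x y = g a b + g b a.
Proof.
move=> ab Pa Pb.
have split_pair x y : same_pair x y a b * g x y =
    (x == a) * ((y == b) * g x y) + (x == b) * ((y == a) * g x y).
  have [->|xa] := eqVneq x a.
    by rewrite /same_pair eqxx (negbTE ab) /= orbF mul1n addn0.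
  by rewrite /same_pair (negbTE xa) /= mul0n add0n; case: (x == b); rewrite ?mul1n.
under eq_bigr => x _ do
  rewrite (eq_bigr _ (fun y _ => split_pair x y)) big_split /= -!big_distrr /=
          !sum_eq_mul //.
by rewrite big_split /= !sum_eq_mul.
Qed.

Definition sqdist (m n : nat) : nat :=
  maxn (m ^ 2) (n ^ 2) - minn (m ^ 2) (n ^ 2).

Lemma sqdiffE (T : finType) (r : rel T) (x y : T) :
  sqdiff r x y = sqdist (deg r x) (deg r y).
Proof. by []. Qed.

Lemma sqdistC m n : sqdist m n = sqdist n m.
Proof. by rewrite /sqdist maxnC minnC. Qed.

Lemma sqdiffC (T : finType) (r : rel T) (x y : T) : sqdiff r x y = sqdiff r y x.
Proof. exact: sqdistC. Qed.

Lemma sqdist_mid m n p : n < m < p -> sqdist m p + sqdist m n = sqdist p n.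
Proof. by move=> /andP[nm mp]; rewrite /sqdist; nia. Qed.

Lemma sqdist_shift2 c d :
  sqdist c.+2 d + (4 * c + 4) * (c.+2 <= d) <= sqdist c d + (4 * c + 4) * (d < c.+2).
Proof.
rewrite /sqdist; case: (leqP c.+2 d) => [le_cd|lt_dc] /=; first nia.
have [le_dc|lt_cd] := leqP d c; first nia.
have -> : d = c.+1 by lia.
nia.
Qed.

Lemma ltn_div2_add2 m n : m.+2 <= n -> m %/ 2 < n %/ 2.
Proof.
move=> le_mn; apply: leq_trans (leq_div2r 2 le_mn).
have -> : m.+2 = m + 1 * 2 by lia.
by rewrite divnDMl // addn1.
Qed.

Lemma cM2E (T : finType) (r : rel T) :
  cM2 r = (\sum_x \sum_y r x y * sqdiff r x y) %/ 2.
Proof.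
rewrite /cM2; congr (_ %/ 2); apply: eq_bigr => x _.
by rewrite big_mkcond; apply: eq_bigr => y _; case: (r x y); rewrite ?mul1n.
Qed.

Lemma same_pairC (T : finType) (x y a b : T) : same_pair x y a b = same_pair y x a b.
Proof. by rewrite /same_pair orbC andbC [(y == b) && _]andbC. Qed.

Lemma same_pair_neql (T : finType) (x y a b : T) :
  x != a -> x != b -> same_pair x y a b = false.
Proof. by rewrite /same_pair => /negbTE-> /negbTE->. Qed.

Lemma transform_simple (T : finType) (e : rel T) (u v w : T) :
  simple_graph e -> u != w -> simple_graph (transform e u v w).
Proof.
move=> [eC e0] uw; split=> [x y|x]; first by rewrite /transform eC !(same_pairC x y).
rewrite /transform e0 /same_pair /= [(x == w) && _]andbC orbb.
by apply/andP => -[/eqP xu /eqP xw]; rewrite -xu xw eqxx in uw.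
Qed.

Section EdgeShift.

Variables (T : finType) (e : rel T) (u v w : T).
Hypotheses (eC : symmetric e) (e0 : irreflexive e).
Hypotheses (euv : e u v) (evw : e v w) (nuw : ~~ e u w) (neq_uw : u != w).

Local Notation e' := (transform e u v w).
Local Notation d := (deg e).

Let neq_uv : u != v. Proof. by apply: contraTneq euv => ->; rewrite e0. Qed.
Let neq_vw : v != w. Proof. by apply: contraTneq evw => ->; rewrite e0. Qed.
Let e'C : symmetric e'. Proof. by case: (transform_simple v (conj eC e0) neq_uw). Qed.
Let e'0 : irreflexive e'. Proof. by case: (transform_simple v (conj eC e0) neq_uw). Qed.

Lemma transform_off x y : x != v -> y != v -> e' x y = e x y || same_pair x y u w.
Proof.
move=> xv yv; rewrite /transform {1 2}/same_pair (negbTE xv) (negbTE yv).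
by rewrite !andbF /= !andbT.
Qed.

Lemma transform_v y : y != u -> y != w -> e' v y = e v y.
Proof.
move=> yu yw; rewrite /transform /same_pair eqxx (negbTE yu) (negbTE yw).
by rewrite (eq_sym v u) (negbTE neq_uv) (negbTE neq_vw) /= ?andbT ?orbF.
Qed.

Lemma transform_uv : e' u v = false.
Proof.
by rewrite /transform /same_pair !eqxx (negbTE neq_vw) (negbTE neq_uw) /= ?andbF.
Qed.

Lemma transform_vw : e' v w = false.
Proof.
rewrite /transform /same_pair !eqxx (eq_sym v u) (negbTE neq_uv).
by rewrite (negbTE neq_vw) /= ?andbF.
Qed.

Lemma transform_uw : e' u w.
Proof. by rewrite /transform /same_pair !eqxx orbT. Qed.

Lemma deg_transform x : x != v -> deg e' x = d x.
Proof.
move=> xv; rewrite !deg_sumb.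
have [->|xu] := eqVneq x u.
  rewrite (bigD2 _ _ neq_vw) [RHS](bigD2 _ _ neq_vw) transform_uv transform_uw.
  rewrite euv (negbTE nuw) /= !add0n !add1n; congr _.+1; apply: eq_bigr => y /andP[yv yw].
  by rewrite transform_off // /same_pair eqxx (negbTE yw) (negbTE neq_uw) orbF.
have [->|xw] := eqVneq x w.
  rewrite (bigD2 _ _ neq_uv) [RHS](bigD2 _ _ neq_uv) e'C transform_uw e'C transform_vw.
  rewrite (eC w u) (negbTE nuw) (eC w v) evw /= !add0n !add1n; congr _.+1.
  apply: eq_bigr => y /andP[yu yv].
  rewrite transform_off ?(eq_sym w) // /same_pair eqxx (negbTE yu) (eq_sym w u).
  by rewrite (negbTE neq_uw) orbF.
apply: eq_bigr => y _.
rewrite /transform (same_pair_neql _ xu xv) (same_pair_neql _ xv xw).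
by rewrite (same_pair_neql _ xu xw) orbF !andbT.
Qed.

Lemma deg_transform_v : (deg e' v).+2 = d v.
Proof.
rewrite !deg_sumb (bigD2 _ _ neq_uw) [RHS](bigD2 _ _ neq_uw).
rewrite (e'C v u) transform_uv transform_vw (eC v u) euv evw /= !add0n !add1n; congr _.+2.
by apply: eq_bigr => y /andP[yu yw]; rewrite transform_v.
Qed.

Lemma sum_off_transform :
  \sum_(x | x != v) \sum_(y | y != v) e' x y * sqdiff e' x y =
    \sum_(x | x != v) \sum_(y | y != v) e x y * sqdiff e x y + 2 * sqdiff e u w.
Proof.
have split_off x y : x != v -> y != v ->
    e' x y * sqdiff e' x y = e x y * sqdiff e x y + same_pair x y u w * sqdiff e x y.
  move=> xv yv; rewrite /sqdiff !deg_transform // transform_off // -mulnDl.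
  congr (_ * _); have [|_] := boolP (same_pair x y u w); last by rewrite orbF addn0.
  by case/orP=> /andP[/eqP-> /eqP->]; rewrite 1?[e w u]eC (negbTE nuw).
under eq_bigr => x xv do under eq_bigr => y yv do rewrite split_off //.
under eq_bigr => x _ do rewrite big_split /=.
rewrite big_split /= sum_same_pair // 1?eq_sym // (sqdiffC e w u).
by rewrite addnn mul2n.
Qed.

Hypotheses (dvu : d v < d u) (dwv : d w < d v) (Yv : v \in Yset e).

Lemma star_sum :
  \sum_y e v y * sqdiff e v y =
    sqdiff e u w + \sum_(y | (y != u) && (y != w)) e v y * sqdiff e v y.
Proof.
rewrite (bigD2 _ _ neq_uw) (eC v u) euv evw /= !mul1n addnA; congr (_ + _).
by rewrite !sqdiffE sqdist_mid ?dwv.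
Qed.

Lemma star_sum_transform :
  \sum_y e' v y * sqdiff e' v y =
    \sum_(y | (y != u) && (y != w)) e v y * sqdist (deg e' v) (d y).
Proof.
rewrite (bigD2 _ _ neq_uw) (e'C v u) transform_uv transform_vw /= !mul0n !add0n.
apply: eq_bigr => y /andP[yu yw]; rewrite transform_v //; case evy: (e v y) => //.
have yv : y != v by apply: contraTneq evy => ->; rewrite e0.
by rewrite sqdiffE (deg_transform yv).
Qed.

Lemma outdegF_v :
  outdegF e v = (\sum_(y | (y != u) && (y != w)) e v y * (d y < d v)).+1.
Proof.
rewrite /outdegF card_set_sumb (bigD2 _ _ neq_uw) /arcF (eC v u) euv evw.
rewrite ltnNge (ltnW dvu) dwv /= add0n add1n; congr _.+1.
by apply: eq_bigr => y _; rewrite mulnb.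
Qed.

Lemma indegF_v :
  indegF e v <= (\sum_(y | (y != u) && (y != w)) e v y * (d v <= d y)).+1.
Proof.
rewrite /indegF card_set_sumb (bigD2 _ _ neq_uw) /arcF euv dvu (eC w v) evw.
rewrite ltnNge (ltnW dwv) /= add0n add1n ltnS; apply: leq_sum => y _.
by rewrite eC; case: (e v y); rewrite //= mul1n; case: ltnP => // /ltnW ->.
Qed.

Lemma star_rest_lt :
  \sum_(y | (y != u) && (y != w)) e v y * sqdiff e v y <
    \sum_(y | (y != u) && (y != w)) e v y * sqdist (deg e' v) (d y).
Proof.
have out_lt_in : outdegF e v < indegF e v by move: Yv; rewrite inE.
have := leq_trans out_lt_in indegF_v; rewrite outdegF_v !ltnS.
set P := \sum_(y | _) e v y * (d v <= d y); set Q := \sum_(y | _) e v y * (d y < d v).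
move=> lt_QP; have dv : d v = (deg e' v).+2 by rewrite deg_transform_v.
set c := deg e' v in dv *.
have shift : \sum_(y | (y != u) && (y != w)) e v y * sqdiff e v y + (4 * c + 4) * P <=
    \sum_(y | (y != u) && (y != w)) e v y * sqdist c (d y) + (4 * c + 4) * Q.
  rewrite !big_distrr -!big_split /=; apply: leq_sum => y _.
  by rewrite sqdiffE dv; case: (e v y); rewrite //= !mul1n; apply: sqdist_shift2.
nia.
Qed.

Lemma cM2_transform_lt : cM2 e < cM2 e'.
Proof.
rewrite !cM2E (sum_adj_bigD1 v eC e0 (sqdiffC e)).
rewrite (sum_adj_bigD1 v e'C e'0 (sqdiffC e')).
rewrite star_sum star_sum_transform sum_off_transform.
by apply: ltn_div2_add2; have := star_rest_lt; lia.
Qed.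

End EdgeShift.

Theorem mainTheorem4 (T : finType) (e : rel T) (u v w : T) :
  simple_graph e ->
  v \in Yset e ->
  arcF e u v -> arcF e v w ->
  ~~ e u w ->
  cM2 e < cM2 (transform e u v w).
Proof.
move=> [eC e0] Yv /andP[euv dvu] /andP[evw dwv] nuw.
have neq_uw : u != w by apply: contraTneq dvu => ->; rewrite -leqNgt ltnW.
exact: cM2_transform_lt.
Qed.
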